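(* (a) Fix $i\in\{1,\dots,m_x\}$ and suppose $(\underline b,\bar b,\underline S_{[i]},\bar S_{[i]})$ with $\underline S_{[i]}\in\mathbb{D}_+^{\underline m}$, $\bar S_{[i]}\in\mathbb{D}_+^{\bar m}$ satisfies condition (X$_i$). Consider the LMI in $(\underline{\mathbf b},\bar{\mathbf b},\hat{\underline{\mathbf S}}_{[i]},\hat{\bar{\mathbf S}}_{[i]})$: $$\begin{bmatrix} \hat{\underline{\mathbf S}}_{[i]} & \mathbf 0 & \underline{\mathbf b} & \mathbf 0 & \mathbf 0\\ * & \hat{\bar{\mathbf S}}_{[i]} & \bar{\mathbf b} & \mathbf 0 & \mathbf 0\\ * & * & 2v^x_i & V^x_i & V^x_i\\ * & * & * & \mathcal{L}^{\underline P,\underline S_{[i]}^{-1}}_{\underline P,\hat{\underline{\mathbf S}}_{[i]}} & \mathbf 0\\ * & * & * & * & \mathcal{L}^{\bar P,\bar S_{[i]}^{-1}}_{\bar P,\hat{\bar{\mathbf S}}_{[i]}} \end{bmatrix}\succ0.$$ Then it is satisfied by $(\underline b,\bar b,\underline S_{[i]}^{-1},\bar S_{[i]}^{-1})$, and any solution with $\hat{\underline{\mathbf S}}_{[i]}\in\mathbb{D}_+^{\underline m}$, $\hat{\bar{\mathbf S}}_{[i]}\in\mathbb{D}_+^{\bar m}$ gives $(\underline{\mathbf b},\bar{\mathbf b},\hat{\underline{\mathbf S}}_{[i]}^{-1},\hat{\bar{\mathbf S}}_{[i]}^{-1})$ satisfying (X$_i$). (b) Fix $i\in\{1,\dots,m_u\}$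 and suppose $(K,\underline b,\bar b,\underline R_{[i]},\bar R_{[i]})$ with $\underline R_{[i]}\in\mathbb{D}_+^{\underline m}$, $\bar R_{[i]}\in\mathbb{D}_+^{\bar m}$ satisfies condition (U$_i$). Consider the LMI in $(\mathbf K,\underline{\mathbf b},\bar{\mathbf b},\hat{\underline{\mathbf R}}_{[i]},\hat{\bar{\mathbf R}}_{[i]})$: $$\begin{bmatrix} \hat{\underline{\mathbf R}}_{[i]} & \mathbf 0 & \underline{\mathbf b} & \mathbf 0 & \mathbf 0\\ * & \hat{\bar{\mathbf R}}_{[i]} & \bar{\mathbf b} & \mathbf 0 & \mathbf 0\\ * & * & 2v^u_i & V^u_i\mathbf K & V^u_i\mathbf K\\ * & * & * & \mathcal{L}^{\underline P,\underline R_{[i]}^{-1}}_{\underline P,\hat{\underline{\mathbf R}}_{[i]}} & \mathbf 0\\ * & * & * & * & \mathcal{L}^{\bar P,\bar R_{[i]}^{-1}}_{\bar P,\hat{\bar{\mathbf R}}_{[i]}} \end{bmatrix}\succ0.$$ Then it is satisfied by $(K,\underline b,\bar b,\underline R_{[i]}^{-1},\bar R_{[i]}^{-1})$, and any solution with $\hat{\underline{\mathbf R}}_{[i]}\in\mathbb{D}_+^{\underline m}$, $\hat{\bar{\mathbf R}}_{[i]}\in\mathbb{D}_+^{\bar m}$ gives $(\mathbf K,\underline{\mathbf b},\bar{\mathbf b},\hat{\underline{\mathbf R}}_{[i]}^{-1},\hat{\bar{\mathbf R}}_{[i]}^{-1})$ satisfying (U$_i$).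
   Context: Notation: $M_i$ is the $i$-th row of $M$, $b_i$ the $i$-th entry of $b$; $\mathbb{D}_+^m$ is the set of $m\times m$ diagonal matrices with positive diagonal; $\succ0$ means symmetric positive definite; $*$ denotes symmetric blocks. For $\mathbf L,L\in\mathbb{R}^{m\times n}$ and symmetric invertible $\mathbf D,D\in\mathbb{R}^{m\times m}$, $\mathcal{L}^{L,D}_{\mathbf L,\mathbf D}:=\mathbf L^\top D^{-1}L+L^\top D^{-1}\mathbf L-L^\top D^{-1}\mathbf DD^{-1}L$. Fixed data: $\underline P\in\mathbb{R}^{\underline m\times n_x}$, $\bar P\in\mathbb{R}^{\bar m\times n_x}$, $V^x\in\mathbb{R}^{m_x\times n_x}$, $v^x\in\mathbb{R}^{m_x}$, $V^u\in\mathbb{R}^{m_u\times n_u}$, $v^u\in\mathbb{R}^{m_u}$. Variables $\underline b\in\mathbb{R}^{\underline m}$, $\bar b\in\mathbb{R}^{\bar m}$, $K\in\mathbb{R}^{n_u\times n_x}$. Condition (X$_i$): $$\begin{bmatrix}2v^x_i-\underline b^\top\underline S_{[i]}\underline b-\bar b^\top\bar S_{[i]}\bar b & V^x_i & V^x_i\\ * & \underline P^\top\underline S_{[i]}\underline P & \mathbf 0\\ * & * & \bar P^\top\bar S_{[i]}\bar P\end{bmatrix}\succ0.$$ Condition (U$_i$): $$\begin{bmatrix}2v^u_i-\underline b^\top\underline R_{[i]}\underline b-\bar b^\top\bar R_{[i]}\bar b & V^u_iK & V^u_iK\\ * & \underline P^\top\underline R_{[i]}\underline P & \mathbf 0\\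 * & * & \bar P^\top\bar R_{[i]}\bar P\end{bmatrix}\succ0.$$ *)

From mathcomp Require Import all_boot all_order all_algebra.
Set Implicit Arguments. Unset Strict Implicit. Unset Printing Implicit Defensive.
Import Order.TTheory GRing.Theory Num.Theory.
Local Open Scope ring_scope.

Definition posdef (R : realFieldType) (n : nat) (M : 'M[R]_n) : Prop :=
  M^T = M /\ forall x : 'cV[R]_n, x != 0 -> 0 < (x^T *m M *m x) 0 0.

Definition diagpos (R : realFieldType) (m : nat) (S : 'M[R]_m) : Prop :=
  is_diag_mx S /\ forall i : 'I_m, 0 < S i i.

Definition Lcal (R : realFieldType) (m n : nat)
    (L : 'M[R]_(m, n)) (D : 'M[R]_m) (Lb : 'M[R]_(m, n)) (Db : 'M[R]_m)
    : 'M[R]_n :=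
  Lb^T *m invmx D *m L + L^T *m invmx D *m Lb
  - L^T *m invmx D *m Db *m invmx D *m L.

Definition sym2 (R : realFieldType) (p q : nat)
    (A : 'M[R]_p) (B : 'M[R]_(p, q)) (D : 'M[R]_q) : 'M[R]_(p + q) :=
  block_mx A B B^T D.

(* Condition (X_i) / (U_i): the 3x3 symmetric block matrix
   [ s  w  w ; * P1^T S1 P1  0 ; * * P2^T S2 P2 ],
   with s = 2 v_i - b1^T S1 b1 - b2^T S2 b2 (a 1x1 matrix). *)
Definition cond3 (R : realFieldType) (m1 m2 n : nat)
    (P1 : 'M[R]_(m1, n)) (P2 : 'M[R]_(m2, n)) (vi : R) (w : 'rV[R]_n)
    (b1 : 'cV[R]_m1) (b2 : 'cV[R]_m2) (S1 : 'M[R]_m1) (S2 : 'M[R]_m2)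
    : 'M[R]_(1 + n + n) :=
  sym2 (sym2 ((2 * vi)%:M - b1^T *m S1 *m b1 - b2^T *m S2 *m b2) w
             (P1^T *m S1 *m P1))
       (col_mx w 0)
       (P2^T *m S2 *m P2).

(* The 5x5 symmetric block LMI matrix
   [ Sh1 0 b1 0 0 ; * Sh2 b2 0 0 ; * * 2v_i w w ; * * * L1 0 ; * * * * L2 ]
   with L1 = Lcal P1 S1^-1 P1 Sh1, L2 = Lcal P2 S2^-1 P2 Sh2
   (S1, S2 the fixed, given matrices). *)
Definition lmi5 (R : realFieldType) (m1 m2 n : nat)
    (P1 : 'M[R]_(m1, n)) (P2 : 'M[R]_(m2, n)) (vi : R) (w : 'rV[R]_n)
    (S1 : 'M[R]_m1) (S2 : 'M[R]_m2)
    (b1 : 'cV[R]_m1) (b2 : 'cV[R]_m2) (Sh1 : 'M[R]_m1) (Sh2 : 'M[R]_m2)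
    : 'M[R]_(m1 + m2 + 1 + n + n) :=
  sym2 (sym2 (sym2 (sym2 Sh1 0 Sh2) (col_mx b1 b2) (2 * vi)%:M)
             (col_mx (col_mx 0 0) w)
             (Lcal P1 (invmx S1) P1 Sh1))
       (col_mx (col_mx (col_mx 0 0) w) 0)
       (Lcal P2 (invmx S2) P2 Sh2).

From mathcomp Require Import all_boot all_order all_algebra.
From mathcomp Require Import ring lra.
Set Implicit Arguments. Unset Strict Implicit. Unset Printing Implicit Defensive.
Import Order.TTheory GRing.Theory Num.Theory.
Local Open Scope ring_scope.

(* Both directions are completions of squares.  With hat-blocks S1^-1, S2^-1
   the L-blocks reduce to P^T S P, and the quadratic form of the 5-block LMI at
   (u1, u2, c, y1, y2) is the form of (X_i) at (c, y1, y2) plus the squares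
   (uk + c Sk bk)^T Sk^-1 (uk + c Sk bk).  Conversely, for positive definite
   hat-blocks Sh, the choice uk = -c Shk^-1 bk eliminates the first two block
   rows, and the form of (X_i) with weights Sh^-1 exceeds what remains by the
   squares ((Sh^-1 - S) P y)^T Sh ((Sh^-1 - S) P y). *)

Section QuadraticForms.
Variable R : realFieldType.

Definition qform n (A : 'M[R]_n) (x : 'cV[R]_n) : R := (x^T *m A *m x) 0 0.

Definition bform p q (x : 'cV[R]_p) (B : 'M[R]_(p, q)) (y : 'cV[R]_q) : R :=
  (x^T *m B *m y) 0 0.

Definition vdot n (x y : 'cV[R]_n) : R := (x^T *m y) 0 0.

Lemma mxE_add p q (A B : 'M[R]_(p, q)) i j : (A + B) i j = A i j + B i j.
Proof. by rewrite mxE. Qed.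

Lemma mxE_opp p q (A : 'M[R]_(p, q)) i j : (- A) i j = - A i j.
Proof. by rewrite mxE. Qed.

Lemma mxE_scale p q c (A : 'M[R]_(p, q)) i j : (c *: A) i j = c * A i j.
Proof. by rewrite mxE. Qed.

Lemma scalar_mx11E (c : R) : (c%:M : 'M[R]_1) 0 0 = c.
Proof. by rewrite mxE eqxx mulr1n. Qed.

Lemma trmx11 (A : 'M[R]_1) : A^T = A.
Proof. by rewrite [A]mx11_scalar tr_scalar_mx. Qed.

Lemma col_mx_split p q (z : 'cV[R]_(p + q)) : exists a b, z = col_mx a b.
Proof. by exists (usubmx z), (dsubmx z); rewrite vsubmxK. Qed.

Lemma bform_tr p q x (B : 'M[R]_(p, q)) y : bform y B^T x = bform x B y.
Proof.
by rewrite /bform -(trmx11 (x^T *m B *m y)) !trmx_mul trmxK mulmxA mxE.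
Qed.

Lemma bform0 p q x y : bform x (0 : 'M[R]_(p, q)) y = 0.
Proof. by rewrite /bform mulmx0 mul0mx mxE. Qed.

Lemma bform_col p1 p2 q x1 x2 (B1 : 'M[R]_(p1, q)) (B2 : 'M[R]_(p2, q)) y :
  bform (col_mx x1 x2) (col_mx B1 B2) y = bform x1 B1 y + bform x2 B2 y.
Proof. by rewrite /bform tr_col_mx mul_row_col mulmxDl mxE_add. Qed.

Lemma bformZr p q x (B : 'M[R]_(p, q)) c y :
  bform x B (c *: y) = c * bform x B y.
Proof. by rewrite /bform -scalemxAr mxE_scale. Qed.

Lemma bform_scalar_r p x (b : 'cV[R]_p) c : bform x b c%:M = c * vdot x b.
Proof. by rewrite /bform mul_mx_scalar mxE_scale. Qed.

Lemma bform_scalar_l q (w : 'rV[R]_q) y c : bform c%:M w y = c * (w *m y) 0 0.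
Proof. by rewrite /bform tr_scalar_mx -mulmxA mul_scalar_mx mxE_scale. Qed.

Lemma vdotZ n c (x y : 'cV[R]_n) : vdot (c *: x) y = c * vdot x y.
Proof. by rewrite /vdot linearZ /= -scalemxAl mxE_scale. Qed.

Lemma vdotN n (x y : 'cV[R]_n) : vdot (- x) y = - vdot x y.
Proof. by rewrite -scaleN1r vdotZ mulN1r. Qed.

Lemma qform0 n (A : 'M[R]_n) : qform A 0 = 0.
Proof. by rewrite /qform mulmx0 mxE. Qed.

Lemma qformZ n (A : 'M[R]_n) c x : qform A (c *: x) = c ^+ 2 * qform A x.
Proof.
by rewrite /qform linearZ /= linearZ /= -!scalemxAl !mxE_scale expr2 mulrA.
Qed.

Lemma qformN n (A : 'M[R]_n) x : qform A (- x) = qform A x.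
Proof. by rewrite -scaleN1r qformZ expr2 mulN1r opprK mul1r. Qed.

Lemma qformD n (A : 'M[R]_n) x y : A^T = A ->
  qform A (x + y) = qform A x + 2 * bform x A y + qform A y.
Proof.
move=> sA; rewrite /qform !linearD /= !mulmxDl !mxE_add.
rewrite -/(bform y A x) -[in bform y A x]sA bform_tr /bform; ring.
Qed.

Lemma qform_scalar (A : 'M[R]_1) c : qform A c%:M = c ^+ 2 * A 0 0.
Proof.
rewrite /qform tr_scalar_mx mul_scalar_mx mul_mx_scalar scalerA mxE_scale.
ring.
Qed.

Lemma qform_sym2 p q (A : 'M[R]_p) B (D : 'M[R]_q) x1 x2 :
  qform (sym2 A B D) (col_mx x1 x2) =
  qform A x1 + 2 * bform x1 B x2 + qform D x2.
Proof.
rewrite /qform /sym2 tr_col_mx mul_row_block mul_row_col !mulmxDl !mxE_add.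
rewrite -/(bform x2 B^T x1) bform_tr -/(bform x1 B x2).
by rewrite -/(qform A x1) -/(qform D x2) /bform; ring.
Qed.

Lemma sym2_sym p q (A : 'M[R]_p) B (D : 'M[R]_q) : A^T = A -> D^T = D ->
  (sym2 A B D)^T = sym2 A B D.
Proof. by move=> sA sD; rewrite /sym2 tr_block_mx sA sD trmxK. Qed.

End QuadraticForms.

Section PositiveDefinite.
Variable R : realFieldType.

Lemma posdef_qform_ge0 n (A : 'M[R]_n) x : posdef A -> 0 <= qform A x.
Proof.
case=> _ pA; have [->|nz] := eqVneq x 0; first by rewrite qform0.
exact/ltW/pA.
Qed.

Lemma posdef_unit n (A : 'M[R]_n) : posdef A -> A \in unitmx.
Proof.
case=> _ pA; rewrite -row_free_unit -kermx_eq0; apply/eqP/row_matrixP => i.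
rewrite row0; set u := row i _.
have uA : u *m A = 0 by rewrite /u -row_mul mulmx_ker row0.
apply/eqP; apply: contraT => nz.
have := pA u^T; rewrite trmx_eq0 => /(_ nz).
by rewrite trmxK uA mul0mx mxE ltxx.
Qed.

Lemma invmx_sym n (A : 'M[R]_n) : A^T = A -> (invmx A)^T = invmx A.
Proof. by move=> sA; rewrite trmx_inv sA. Qed.

Lemma qform_invmx_mul n (A : 'M[R]_n) x : A^T = A -> A \in unitmx ->
  qform A (invmx A *m x) = qform (invmx A) x.
Proof.
by move=> sA uA; rewrite /qform trmx_mul trmx_inv sA !mulmxA mulmxKV.
Qed.

Lemma qform_invmx_mulV n (A : 'M[R]_n) x : A^T = A -> A \in unitmx ->
  qform (invmx A) (A *m x) = qform A x.
Proof. by move=> sA uA; rewrite /qform trmx_mul sA !mulmxA mulmxKV. Qed.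

Lemma posdef_inv n (A : 'M[R]_n) : posdef A -> posdef (invmx A).
Proof.
move=> pdA; have uA := posdef_unit pdA; case: pdA => sA pA.
split; first exact: invmx_sym.
move=> x nz; rewrite -/(qform _ x) -qform_invmx_mul //; apply: pA.
by apply: contraNneq nz => h; rewrite -(mulKVmx uA x) h mulmx0.
Qed.

Lemma diag_mx_sym n (A : 'M[R]_n) : is_diag_mx A -> A^T = A.
Proof.
move/is_diag_mxP=> dA; apply/matrixP=> i j; rewrite mxE.
by have [->|ne] := eqVneq i j; rewrite // !dA // eq_sym.
Qed.

Lemma qform_diag n (A : 'M[R]_n) x : is_diag_mx A ->
  qform A x = \sum_i A i i * x i 0 ^+ 2.
Proof.
move/is_diag_mxP=> dA; rewrite /qform mxE; apply: eq_bigr => j _.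
rewrite mxE (bigD1 j) //= big1 ?addr0 => [|k kj]; last by rewrite dA ?mulr0.
by rewrite [x^T 0 j]mxE; ring.
Qed.

Lemma diagpos_posdef n (A : 'M[R]_n) : diagpos A -> posdef A.
Proof.
case=> dA pA; split; first exact: diag_mx_sym.
move=> x nz; rewrite -/(qform A x) qform_diag //.
have [i xi] : exists i, x i 0 != 0.
  apply/existsP; apply: contraR nz => /existsPn x0.
  by apply/eqP/matrixP=> i j; rewrite (ord1 j) mxE; apply/eqP/negPn/x0.
rewrite (bigD1 i) //=; apply: ltr_pwDl.
  by rewrite mulr_gt0 // lt_def sqr_ge0 sqrf_eq0 xi.
by apply: sumr_ge0 => k _; rewrite mulr_ge0 ?sqr_ge0 ?ltW.
Qed.

End PositiveDefinite.

Section Lcal.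
Variables (R : realFieldType) (m n : nat) (P : 'M[R]_(m, n)).

Lemma Lcal_invmx S : S \in unitmx ->
  Lcal P (invmx S) P (invmx S) = P^T *m S *m P.
Proof.
move=> uS; rewrite /Lcal invmxK -!mulmxA (mulmxA (invmx S)) mulVmx //.
by rewrite mul1mx addrK.
Qed.

Lemma Lcal_sym D Db : D^T = D -> Db^T = Db -> (Lcal P D P Db)^T = Lcal P D P Db.
Proof.
move=> sD sDb; rewrite /Lcal linearB linearD /= !trmx_mul !trmxK trmx_inv sD.
by rewrite sDb !mulmxA addrC.
Qed.

Lemma tr_mulmx_sym S : S^T = S -> (P^T *m S *m P)^T = P^T *m S *m P.
Proof. by move=> sS; rewrite !trmx_mul trmxK sS mulmxA. Qed.

(* The L-block is a linearisation of P^T Sh^-1 P around Sh = S^-1; the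
   linearisation error is an exact square. *)
Lemma qform_Lcal_gap S Sh y : S^T = S -> Sh^T = Sh -> Sh \in unitmx ->
  qform (P^T *m invmx Sh *m P) y - qform (Lcal P (invmx S) P Sh) y
  = qform Sh ((invmx Sh - S) *m P *m y).
Proof.
move=> sS sSh uSh.
have sD : (invmx Sh - S)^T = invmx Sh - S by rewrite linearB /= invmx_sym ?sS.
rewrite /qform /Lcal invmxK !trmx_mul sD.
rewrite ?(mulmxBl, mulmxBr, mulmxDl, mulmxDr, mulmxN, mulNmx) !mulmxA.
by rewrite ?mulmxK ?mulmxKV // ?(mxE_add, mxE_opp); ring.
Qed.

End Lcal.

Section LMI.
Variables (R : realFieldType) (m1 m2 n : nat).
Variables (P1 : 'M[R]_(m1, n)) (P2 : 'M[R]_(m2, n)) (v : R) (w : 'rV[R]_n).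

Lemma cond3_sym b1 b2 (T1 : 'M[R]_m1) (T2 : 'M[R]_m2) :
  T1^T = T1 -> T2^T = T2 ->
  (cond3 P1 P2 v w b1 b2 T1 T2)^T = cond3 P1 P2 v w b1 b2 T1 T2.
Proof.
move=> s1 s2; rewrite /cond3 sym2_sym ?tr_mulmx_sym //.
by rewrite sym2_sym ?trmx11 ?tr_mulmx_sym.
Qed.

Lemma lmi5_sym S1 S2 b1 b2 Sh1 Sh2 :
  S1^T = S1 -> S2^T = S2 -> Sh1^T = Sh1 -> Sh2^T = Sh2 ->
  (lmi5 P1 P2 v w S1 S2 b1 b2 Sh1 Sh2)^T = lmi5 P1 P2 v w S1 S2 b1 b2 Sh1 Sh2.
Proof.
move=> s1 s2 sh1 sh2.
rewrite /lmi5 sym2_sym ?Lcal_sym ?invmx_sym // sym2_sym ?Lcal_sym ?invmx_sym //.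
by rewrite sym2_sym ?trmx11 ?sym2_sym.
Qed.

Lemma qform_cond3 b1 b2 T1 T2 c y1 y2 :
  qform (cond3 P1 P2 v w b1 b2 T1 T2) (col_mx (col_mx c%:M y1) y2) =
  c ^+ 2 * (2 * v - qform T1 b1 - qform T2 b2)
  + 2 * (c * (w *m y1) 0 0) + qform (P1^T *m T1 *m P1) y1
  + 2 * (c * (w *m y2) 0 0) + qform (P2^T *m T2 *m P2) y2.
Proof.
rewrite /cond3 !qform_sym2 ?bform_col ?bform0 ?bform_scalar_l qform_scalar.
rewrite ?(mxE_add, mxE_opp) scalar_mx11E -/(qform T1 b1) -/(qform T2 b2); ring.
Qed.

Lemma qform_lmi5 S1 S2 b1 b2 Sh1 Sh2 u1 u2 c y1 y2 :
  qform (lmi5 P1 P2 v w S1 S2 b1 b2 Sh1 Sh2)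
     (col_mx (col_mx (col_mx (col_mx u1 u2) c%:M) y1) y2) =
  qform Sh1 u1 + qform Sh2 u2 + 2 * (c * vdot u1 b1 + c * vdot u2 b2)
  + c ^+ 2 * (2 * v)
  + 2 * (c * (w *m y1) 0 0) + qform (Lcal P1 (invmx S1) P1 Sh1) y1
  + 2 * (c * (w *m y2) 0 0) + qform (Lcal P2 (invmx S2) P2 Sh2) y2.
Proof.
rewrite /lmi5 !qform_sym2 ?col_mx0 ?bform_col ?bform0 ?bform_scalar_r.
by rewrite ?bform_scalar_l qform_scalar scalar_mx11E; ring.
Qed.

Lemma qform_lmi5_invmx S1 S2 b1 b2 u1 u2 c y1 y2 :
  S1^T = S1 -> S2^T = S2 -> S1 \in unitmx -> S2 \in unitmx ->
  qform (lmi5 P1 P2 v w S1 S2 b1 b2 (invmx S1) (invmx S2))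
     (col_mx (col_mx (col_mx (col_mx u1 u2) c%:M) y1) y2) =
  qform (invmx S1) (u1 + c *: (S1 *m b1))
  + qform (invmx S2) (u2 + c *: (S2 *m b2))
  + qform (cond3 P1 P2 v w b1 b2 S1 S2) (col_mx (col_mx c%:M y1) y2).
Proof.
move=> s1 s2 u1S u2S.
rewrite qform_lmi5 qform_cond3 !Lcal_invmx // !qformD ?invmx_sym //.
rewrite !bformZr !qformZ.
rewrite /bform !mulmxA !mulmxKV // -/(vdot u1 b1) -/(vdot u2 b2).
by rewrite !qform_invmx_mulV //; ring.
Qed.

Lemma qform_cond3_invmx S1 S2 b1 b2 Sh1 Sh2 c y1 y2 :
  S1^T = S1 -> S2^T = S2 -> Sh1^T = Sh1 -> Sh2^T = Sh2 ->
  Sh1 \in unitmx -> Sh2 \in unitmx ->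
  let u1 := - (c *: (invmx Sh1 *m b1)) in
  let u2 := - (c *: (invmx Sh2 *m b2)) in
  qform (cond3 P1 P2 v w b1 b2 (invmx Sh1) (invmx Sh2))
    (col_mx (col_mx c%:M y1) y2) =
  qform (lmi5 P1 P2 v w S1 S2 b1 b2 Sh1 Sh2)
     (col_mx (col_mx (col_mx (col_mx u1 u2) c%:M) y1) y2)
  + qform Sh1 ((invmx Sh1 - S1) *m P1 *m y1)
  + qform Sh2 ((invmx Sh2 - S2) *m P2 *m y2).
Proof.
move=> s1 s2 sh1 sh2 uh1 uh2 u1 u2.
rewrite -(qform_Lcal_gap _ _ s1 sh1 uh1) -(qform_Lcal_gap _ _ s2 sh2 uh2).
rewrite qform_lmi5 qform_cond3 /u1 /u2 !qformN !qformZ !qform_invmx_mul //.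
rewrite !vdotN !vdotZ /vdot !trmx_mul !invmx_sym //.
by rewrite -/(qform (invmx Sh1) b1) -/(qform (invmx Sh2) b2); ring.
Qed.

Lemma cond3_lmi5 S1 S2 b1 b2 : posdef S1 -> posdef S2 ->
  posdef (cond3 P1 P2 v w b1 b2 S1 S2) ->
  posdef (lmi5 P1 P2 v w S1 S2 b1 b2 (invmx S1) (invmx S2)).
Proof.
move=> pd1 pd2 pdX; have [s1 _] := pd1; have [s2 _] := pd2.
have pi1 := posdef_inv pd1; have pi2 := posdef_inv pd2.
split; first by rewrite lmi5_sym ?invmx_sym.
move=> z; rewrite -/(qform _ z).
have [Z4 [y2 ->]] := col_mx_split z; have [Z3 [y1 ->]] := col_mx_split Z4.
have [U [t ->]] := col_mx_split Z3; have [u1 [u2 ->]] := col_mx_split U.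
have [c ->] : exists c, t = c%:M by exists (t 0 0); apply: mx11_scalar.
move=> nz; rewrite qform_lmi5_invmx ?posdef_unit //.
set x := col_mx (col_mx _ y1) y2.
have ge1 := posdef_qform_ge0 (u1 + c *: (S1 *m b1)) pi1.
have ge2 := posdef_qform_ge0 (u2 + c *: (S2 *m b2)) pi2.
have [x0|xn0] := eqVneq x 0; last first.
  by have := pdX.2 x xn0; rewrite /qform in ge1 ge2 *; lra.
move/eqP: (x0); rewrite !col_mx_eq0 => /andP[/andP[/eqP cM0 /eqP y10] /eqP y20].
have c0 : c = 0 by rewrite -(scalar_mx11E c) cM0 mxE.
rewrite x0 qform0 c0 !scale0r !addr0 in ge1 ge2 *.
have /orP[nz1|nz2] : (u1 != 0) || (u2 != 0).
  apply: contraNT nz; rewrite negb_or !negbK => /andP[/eqP-> /eqP->].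
  by rewrite cM0 y10 y20 !col_mx0.
- by have := pi1.2 _ nz1; rewrite /qform in ge2 *; lra.
- by have := pi2.2 _ nz2; rewrite /qform in ge1 *; lra.
Qed.

Lemma lmi5_cond3 S1 S2 b1 b2 Sh1 Sh2 : S1^T = S1 -> S2^T = S2 ->
  posdef Sh1 -> posdef Sh2 ->
  posdef (lmi5 P1 P2 v w S1 S2 b1 b2 Sh1 Sh2) ->
  posdef (cond3 P1 P2 v w b1 b2 (invmx Sh1) (invmx Sh2)).
Proof.
move=> s1 s2 pdh1 pdh2 pdL; have [sh1 _] := pdh1; have [sh2 _] := pdh2.
split; first by rewrite cond3_sym ?invmx_sym.
move=> x; rewrite -/(qform _ x).
have [X3 [y2 ->]] := col_mx_split x; have [t [y1 ->]] := col_mx_split X3.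
have [c ->] : exists c, t = c%:M by exists (t 0 0); apply: mx11_scalar.
move=> nz; rewrite (qform_cond3_invmx (S1 := S1) (S2 := S2)) ?posdef_unit //.
rewrite -addrA; apply: ltr_wpDr; first by rewrite addr_ge0 ?posdef_qform_ge0.
apply: pdL.2; apply: contraNneq nz => /eqP; rewrite !col_mx_eq0.
by move=> /andP[/andP[/andP[_ /eqP->] /eqP->] /eqP->]; rewrite !eqxx.
Qed.

End LMI.

Theorem theorem3 (R : realFieldType) (nx nu ml mh mx mu : nat)
    (Pl : 'M[R]_(ml, nx)) (Ph : 'M[R]_(mh, nx))
    (Vx : 'M[R]_(mx, nx)) (vx : 'cV[R]_mx)
    (Vu : 'M[R]_(mu, nu)) (vu : 'cV[R]_mu) :
  (* (a) *)
  (forall (i : 'I_mx) (bl : 'cV[R]_ml) (bh : 'cV[R]_mh)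
          (Sl : 'M[R]_ml) (Sh : 'M[R]_mh),
      diagpos Sl -> diagpos Sh ->
      posdef (cond3 Pl Ph (vx i 0) (row i Vx) bl bh Sl Sh) ->
      posdef (lmi5 Pl Ph (vx i 0) (row i Vx) Sl Sh bl bh (invmx Sl) (invmx Sh))
      /\
      (forall (bbl : 'cV[R]_ml) (bbh : 'cV[R]_mh)
              (Shl : 'M[R]_ml) (Shh : 'M[R]_mh),
          diagpos Shl -> diagpos Shh ->
          posdef (lmi5 Pl Ph (vx i 0) (row i Vx) Sl Sh bbl bbh Shl Shh) ->
          posdef (cond3 Pl Ph (vx i 0) (row i Vx) bbl bbh
                        (invmx Shl) (invmx Shh))))
  /\
  (* (b) *)
  (forall (i : 'I_mu) (K : 'M[R]_(nu, nx)) (bl : 'cV[R]_ml) (bh : 'cV[R]_mh)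
          (Rl : 'M[R]_ml) (Rh : 'M[R]_mh),
      diagpos Rl -> diagpos Rh ->
      posdef (cond3 Pl Ph (vu i 0) (row i Vu *m K) bl bh Rl Rh) ->
      posdef (lmi5 Pl Ph (vu i 0) (row i Vu *m K) Rl Rh bl bh
                   (invmx Rl) (invmx Rh))
      /\
      (forall (KK : 'M[R]_(nu, nx)) (bbl : 'cV[R]_ml) (bbh : 'cV[R]_mh)
              (Rhl : 'M[R]_ml) (Rhh : 'M[R]_mh),
          diagpos Rhl -> diagpos Rhh ->
          posdef (lmi5 Pl Ph (vu i 0) (row i Vu *m KK) Rl Rh bbl bbh Rhl Rhh) ->
          posdef (cond3 Pl Ph (vu i 0) (row i Vu *m KK) bbl bbh
                        (invmx Rhl) (invmx Rhh)))).
Proof.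
split=> [i bl bh Sl Sh /diagpos_posdef pl /diagpos_posdef ph pdX
        |i K bl bh Rl Rh /diagpos_posdef pl /diagpos_posdef ph pdU].
  split=> [|bbl bbh Shl Shh /diagpos_posdef phl /diagpos_posdef phh].
    exact: cond3_lmi5.
  exact: lmi5_cond3 pl.1 ph.1 phl phh.
split=> [|KK bbl bbh Rhl Rhh /diagpos_posdef phl /diagpos_posdef phh].
  exact: cond3_lmi5.
exact: lmi5_cond3 pl.1 ph.1 phl phh.
Qed.
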